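(* Let $m\ge 1$ and let $(\phi_n)_{n\ge 0}$ be vectors in $\mathbb{R}^m$ such that $A_n=\phi_n\phi_n^\top$ satisfies $0\le A_n\le I$ for all $n$. Define $\Phi(i,i)=I$ and $\Phi(n+1,i)=(I-A_n)\Phi(n,i)$ for $n\ge i$. Let $(\mu_j)_{j\ge 0}$ be nonnegative weights, and for $k<N$ let $S_{Nk}=\sum_{j=k}^{N-1}\mu_jA_j$ and $B_{jk}=\sum_{l=k}^{j-1}(\phi_j^\top\phi_l)^2$. Let $(t_k)_{k\ge 0}$ be a strictly increasing sequence of nonnegative integers (so $t_k\to\infty$). If $$\sum_{k=1}^\infty\frac{\lambda_{\min}(S_{t_kt_{k-1}})}{\left(\sqrt{\max_{t_{k-1}\le j<t_k}\mu_j}+\sqrt{\sum_{j=t_{k-1}}^{t_k-1}\mu_jB_{jt_{k-1}}}\right)^2}=\infty$$ (with all denominators nonzero), then $\Phi(n,0)\to 0$ as $n\to\infty$.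
   Context: $\lambda_{\min}$ denotes the smallest eigenvalue of a symmetric matrix; $0\le A\le I$ is in the Loewner order; convergence of matrices is in any norm. *)

From HB Require Import structures.
From mathcomp Require Import all_boot all_order all_algebra.
From mathcomp Require Import all_classical all_reals all_analysis.
Set Implicit Arguments. Unset Strict Implicit. Unset Printing Implicit Defensive.
Import Order.TTheory GRing.Theory Num.Theory.
Import numFieldNormedType.Exports.
Local Open Scope classical_set_scope.
Local Open Scope ring_scope.

Definition psd (R : realType) (m : nat) (M : 'M[R]_m) : Prop :=
  forall x : 'cV[R]_m, 0 <= (x^T *m M *m x) 0 0.

Definition loewner_le (R : realType) (m : nat) (A B : 'M[R]_m) : Prop :=
  psd (B - A).

Definition lambda_min (R : realType) (m : nat) (M : 'M[R]_m) : R :=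
  inf [set a : R | eigenvalue M a].

Fixpoint Phi (R : realType) (m : nat) (A : nat -> 'M[R]_m) (n i : nat) : 'M[R]_m :=
  match n with
  | 0 => 1%:M
  | n'.+1 => if (i <= n')%N then (1%:M - A n') *m Phi A n' i else 1%:M
  end.

Definition outer (R : realType) (m : nat) (phi : 'cV[R]_m) : 'M[R]_m :=
  phi *m phi^T.

Definition Smat (R : realType) (m : nat) (A : nat -> 'M[R]_m) (mu : nat -> R)
  (N k : nat) : 'M[R]_m := \sum_(k <= j < N) mu j *: A j.

Definition Bsum (R : realType) (m : nat) (phi : nat -> 'cV[R]_m) (j k : nat) : R :=
  \sum_(k <= l < j) ((phi j)^T *m phi l) 0 0 ^+ 2.

Definition maxmu (R : realType) (mu : nat -> R) (a b : nat) : R :=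
  \big[Num.max/0]_(a <= j < b) mu j.

Definition denom (R : realType) (m : nat) (phi : nat -> 'cV[R]_m) (mu : nat -> R)
  (a b : nat) : R :=
  (Num.sqrt (maxmu mu a b) + Num.sqrt (\sum_(a <= j < b) mu j * Bsum phi j a)) ^+ 2.

(* Fix x, put x_k = Phi(k,0) x and s_k = phi_k^T x_k.  Since
   x_{k+1} = x_k - s_k phi_k and |phi_k| <= 1, the energy |x_k|^2 drops by at
   least s_k^2 at each step.  On a block [a, b) = [t_{k-1}, t_k) one has
   phi_j^T x_a = s_j + sum_{a <= l < j} (phi_j^T phi_l) s_l, so the Rayleigh
   bound lambda_min(S) |x_a|^2 <= x_a^T S x_a, Minkowski and Cauchy-Schwarz give
   lambda_min(S) |x_a|^2 <= denom * sum_{a <= l < b} s_l^2: over the block the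
   energy contracts by the factor 1 - r_k, r_k the k-th term of the series.
   Divergence of the series of rates drives the energy, hence every column of
   Phi(n,0), to 0. *)

From HB Require Import structures.
From mathcomp Require Import all_boot all_order all_algebra.
From mathcomp Require Import all_classical all_reals all_analysis.
From mathcomp Require Import ring lra.
Import Order.TTheory GRing.Theory Num.Theory.
Import numFieldNormedType.Exports.
Local Open Scope classical_set_scope.
Local Open Scope ring_scope.
Set Implicit Arguments. Unset Strict Implicit. Unset Printing Implicit Defensive.

Section SumInequalities.
Variable R : realFieldType.

Lemma quadratic_ge0_sqr_le (A B C : R) : 0 <= C ->
  (forall t, 0 <= A + 2 * t * B + t ^+ 2 * C) -> B ^+ 2 <= A * C.
Proof.
move=> C0 qge0; have [Cgt0|] := ltP 0 C.
  have := qge0 (- B / C).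
  have -> : A + 2 * (- B / C) * B + (- B / C) ^+ 2 * C = A - B ^+ 2 / C.
    by field; rewrite gt_eqF.
  by rewrite subr_ge0 ler_pdivrMr // mulrC.
move=> Cle0; have C_eq0 : C = 0 by apply/eqP; rewrite eq_le Cle0 C0.
subst C.
have [->|B0] := eqVneq B 0; first by rewrite expr0n mulr0.
have := qge0 (- (A + 1) / (2 * B)).
have -> : A + 2 * (- (A + 1) / (2 * B)) * B + (- (A + 1) / (2 * B)) ^+ 2 * 0 = -1.
  by field; rewrite B0.
by rewrite ler0N1.
Qed.

Variables (I : Type) (r : seq I) (P : pred I).

Lemma sum_cauchy_schwarz (w a b : I -> R) : (forall i, P i -> 0 <= w i) ->
  (\sum_(i <- r | P i) w i * a i * b i) ^+ 2 <=
  (\sum_(i <- r | P i) w i * a i ^+ 2) * (\sum_(i <- r | P i) w i * b i ^+ 2).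
Proof.
move=> w0; apply: quadratic_ge0_sqr_le => [|t].
  by apply: sumr_ge0 => i Pi; rewrite mulr_ge0 ?sqr_ge0 ?w0.
have -> : \sum_(i <- r | P i) w i * a i ^+ 2 + 2 * t * (\sum_(i <- r | P i) w i * a i * b i)
    + t ^+ 2 * (\sum_(i <- r | P i) w i * b i ^+ 2)
    = \sum_(i <- r | P i) w i * (a i + t * b i) ^+ 2.
  by rewrite !mulr_sumr -!big_split /=; apply: eq_bigr => i _; ring.
by apply: sumr_ge0 => i Pi; rewrite mulr_ge0 ?sqr_ge0 ?w0.
Qed.

Lemma sum_cauchy_schwarz1 (a b : I -> R) :
  (\sum_(i <- r | P i) a i * b i) ^+ 2 <=
  (\sum_(i <- r | P i) a i ^+ 2) * (\sum_(i <- r | P i) b i ^+ 2).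
Proof.
have one_mul (f : I -> R) : \sum_(i <- r | P i) 1 * f i = \sum_(i <- r | P i) f i.
  by apply: eq_bigr => i _; rewrite mul1r.
rewrite -one_mul -(one_mul (fun i => a i ^+ 2)) -(one_mul (fun i => b i ^+ 2)).
under eq_bigr do rewrite mulrA.
exact: (@sum_cauchy_schwarz (fun=> 1) a b (fun _ _ => ler01)).
Qed.

End SumInequalities.

Section Minkowski.
Variables (R : rcfType) (I : Type) (r : seq I) (P : pred I).

Lemma sum_minkowski (w a b : I -> R) : (forall i, P i -> 0 <= w i) ->
  \sum_(i <- r | P i) w i * (a i + b i) ^+ 2 <=
  (Num.sqrt (\sum_(i <- r | P i) w i * a i ^+ 2)
   + Num.sqrt (\sum_(i <- r | P i) w i * b i ^+ 2)) ^+ 2.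
Proof.
move=> w0.
set U := \sum_(i <- r | P i) w i * a i ^+ 2.
set V := \sum_(i <- r | P i) w i * b i ^+ 2.
set W := \sum_(i <- r | P i) w i * a i * b i.
have U0 : 0 <= U by apply: sumr_ge0 => i Pi; rewrite mulr_ge0 ?sqr_ge0 ?w0.
have V0 : 0 <= V by apply: sumr_ge0 => i Pi; rewrite mulr_ge0 ?sqr_ge0 ?w0.
have -> : \sum_(i <- r | P i) w i * (a i + b i) ^+ 2 = U + 2 * W + V.
  by rewrite /U /V /W mulr_sumr -!big_split /=; apply: eq_bigr => i _; ring.
have W_le : W <= Num.sqrt U * Num.sqrt V.
  apply: le_trans (ler_norm W) _.
  rewrite -sqrtrM // -sqrtr_sqr ler_sqrt ?mulr_ge0 //.
  exact: sum_cauchy_schwarz.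
rewrite sqrrD !sqr_sqrtr // mulr2n -mulr_natl; lra.
Qed.

End Minkowski.

Section Dot.
Variables (R : realFieldType) (n : nat).
Implicit Types (u v w : 'cV[R]_n) (M : 'M[R]_n).

Definition dot u v : R := (u^T *m v) 0 0.

Lemma dotE u v : dot u v = \sum_i u i 0 * v i 0.
Proof. by rewrite /dot mxE; apply: eq_bigr => i _; rewrite mxE. Qed.

Lemma dotC u v : dot u v = dot v u.
Proof. by rewrite !dotE; apply: eq_bigr => i _; rewrite mulrC. Qed.

Lemma dotDr u v w : dot u (v + w) = dot u v + dot u w.
Proof. by rewrite /dot mulmxDr mxE. Qed.

Lemma dotZr a u v : dot u (a *: v) = a * dot u v.
Proof. by rewrite /dot -scalemxAr mxE. Qed.

Lemma dotBr u v w : dot u (v - w) = dot u v - dot u w.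
Proof. by rewrite dotDr -scaleN1r dotZr mulN1r. Qed.

Lemma dotDl u v w : dot (v + w) u = dot v u + dot w u.
Proof. by rewrite dotC dotDr !(dotC u). Qed.

Lemma dotBl u v w : dot (v - w) u = dot v u - dot w u.
Proof. by rewrite dotC dotBr !(dotC u). Qed.

Lemma dotZl a u v : dot (a *: v) u = a * dot v u.
Proof. by rewrite dotC dotZr dotC. Qed.

Lemma dot0l u : dot 0 u = 0.
Proof. by rewrite /dot trmx0 mul0mx mxE. Qed.

Lemma dot_sumr u (J : Type) (s : seq J) (Q : pred J) (F : J -> 'cV[R]_n) :
  dot u (\sum_(j <- s | Q j) F j) = \sum_(j <- s | Q j) dot u (F j).
Proof. by rewrite /dot mulmx_sumr summxE. Qed.

Lemma dot_mulmxr M u v : dot u (M *m v) = dot (M^T *m u) v.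
Proof. by rewrite /dot trmx_mul trmxK mulmxA. Qed.

Lemma dot_delta i u : dot (delta_mx i 0) u = u i 0.
Proof. by rewrite /dot trmx_delta -rowE mxE. Qed.

Lemma dot_ge0 u : 0 <= dot u u.
Proof. by rewrite dotE; apply: sumr_ge0 => i _; rewrite -expr2 sqr_ge0. Qed.

Lemma dot_eq0 u : (dot u u == 0) = (u == 0).
Proof.
apply/idP/eqP => [|->]; last by rewrite dot0l.
rewrite dotE psumr_eq0 => [/allP u0|i _]; last by rewrite -expr2 sqr_ge0.
apply/matrixP => i j; rewrite (ord1 j) mxE.
by have /implyP/(_ isT) := u0 i (mem_index_enum i); rewrite -expr2 sqrf_eq0 => /eqP.
Qed.

Lemma dot_mul_le_frobenius (N : 'M[R]_n) v :
  dot (N *m v) (N *m v) <= (\sum_i \sum_j N i j ^+ 2) * dot v v.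
Proof.
rewrite dotE [dot v v]dotE mulr_suml; apply: ler_sum => i _.
rewrite -expr2 mxE; under [X in _ * X]eq_bigr do rewrite -expr2.
exact: sum_cauchy_schwarz1.
Qed.

End Dot.

Section PSD.
Variables (R : realType) (n : nat).
Implicit Types (u v : 'cV[R]_n) (M : 'M[R]_n).

Lemma psdP M : psd M <-> forall u, 0 <= dot u (M *m u).
Proof. by split=> M_psd u; have := M_psd u; rewrite /dot mulmxA. Qed.

Lemma psd_cauchy_schwarz M u v : M^T = M -> psd M ->
  dot u (M *m v) ^+ 2 <= dot u (M *m u) * dot v (M *m v).
Proof.
move=> M_sym /psdP M_psd; apply: quadratic_ge0_sqr_le => // t.
have := M_psd (u + t *: v).
rewrite mulmxDr -scalemxAr !dotDl !dotDr !dotZl !dotZr.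
rewrite [dot v (M *m u)]dot_mulmxr M_sym [dot (M *m v) u]dotC.
lra.
Qed.

Lemma dot_mul_psd_le_trace M u : M^T = M -> psd M ->
  dot (M *m u) (M *m u) <= \tr M * dot u (M *m u).
Proof.
move=> M_sym M_psd; rewrite [dot (M *m u) _]dotE /mxtrace mulr_suml.
apply: ler_sum => i _; rewrite -expr2 -(dot_delta i (M *m u)).
have -> : M i i = dot (delta_mx i 0) (M *m delta_mx i 0) by rewrite dot_delta -colE mxE.
exact: psd_cauchy_schwarz.
Qed.

Lemma dot_le_unitmx_psd M u : M^T = M -> psd M -> M \in unitmx ->
  dot u u <= (\sum_i \sum_j invmx M i j ^+ 2) * \tr M * dot u (M *m u).
Proof.
move=> M_sym M_psd M_unit.
rewrite {1 2}(_ : u = invmx M *m (M *m u)); last by rewrite mulKmx.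
rewrite -mulrA; apply: le_trans (dot_mul_le_frobenius _ _) _.
rewrite ler_wpM2l ?dot_mul_psd_le_trace //.
by apply: sumr_ge0 => i _; apply: sumr_ge0 => j _; exact: sqr_ge0.
Qed.

End PSD.

Section Rayleigh.
Variables (R : realType) (n : nat) (S : 'M[R]_n.+1).
Hypotheses (S_sym : S^T = S) (S_psd : psd S).

Definition rayleigh_inf : R :=
  inf [set dot u (S *m u) | u in [set u : 'cV[R]_n.+1 | dot u u = 1]].

Let e0 : 'cV[R]_n.+1 := delta_mx 0 0.

Let dot_e0 : dot e0 e0 = 1.
Proof. by rewrite dot_delta mxE !eqxx. Qed.

Let rayleigh_has_lbound :
  has_lbound [set dot u (S *m u) | u in [set u : 'cV[R]_n.+1 | dot u u = 1]].
Proof. by exists 0 => _ [u _ <-]; move/psdP: S_psd. Qed.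

Lemma rayleigh_inf_le u : rayleigh_inf * dot u u <= dot u (S *m u).
Proof.
have [/eqP|u_neq0] := eqVneq (dot u u) 0.
  by rewrite dot_eq0 => /eqP ->; rewrite mulmx0 !dot0l mulr0.
have uu_gt0 : 0 < dot u u by rewrite lt_neqAle eq_sym u_neq0 dot_ge0.
set s := Num.sqrt (dot u u).
have s_gt0 : 0 < s by rewrite sqrtr_gt0.
have s2 : s ^+ 2 = dot u u by rewrite sqr_sqrtr // dot_ge0.
have unit_u : dot (s^-1 *: u) (s^-1 *: u) = 1.
  by rewrite dotZl dotZr -s2; field; rewrite gt_eqF.
have := ge_inf rayleigh_has_lbound (ex_intro2 _ _ (s^-1 *: u) unit_u erefl).
rewrite -scalemxAr dotZl dotZr -/rayleigh_inf -s2 => c_le.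
have := ler_wpM2r (sqr_ge0 s) c_le.
suff -> : s^-1 * (s^-1 * dot u (S *m u)) * s ^+ 2 = dot u (S *m u) by [].
by field; rewrite gt_eqF.
Qed.

(* S - c I is psd for the infimum c of the Rayleigh quotient; were it
   invertible, [dot_le_unitmx_psd] would make c + 1/K a larger lower bound. *)
Lemma eigenvalue_rayleigh_inf : eigenvalue S rayleigh_inf.
Proof.
set c := rayleigh_inf; pose M := S - c%:M.
have M_sym : M^T = M by rewrite /M linearB /= S_sym tr_scalar_mx.
have dot_M u : dot u (M *m u) = dot u (S *m u) - c * dot u u.
  by rewrite /M mulmxBl mul_scalar_mx dotBr dotZr.
have M_psd : psd M by apply/psdP => u; rewrite dot_M subr_ge0 rayleigh_inf_le.
suff /det0P [v v_neq0 vM0] : \det M == 0.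
  apply/eigenvalueP; exists v => //; apply/eqP.
  by move: vM0; rewrite /M mulmxBr mul_mx_scalar => /eqP; rewrite subr_eq0.
apply/negPn/negP => detM_neq0.
have M_unit : M \in unitmx by rewrite unitmxE unitfE.
set K := (\sum_i \sum_j invmx M i j ^+ 2) * \tr M.
have K_dot u : dot u u = 1 -> 1 <= K * (dot u (S *m u) - c).
  by move=> uu1; rewrite -uu1 -[X in _ - X]mulr1 -uu1 -dot_M dot_le_unitmx_psd.
have K_gt0 : 0 < K.
  have := K_dot e0 dot_e0; have := proj1 (psdP M) M_psd e0.
  rewrite dot_M dot_e0 mulr1; nra.
have lb : lbound [set dot u (S *m u) | u in [set u | dot u u = 1]] (c + K^-1).
  move=> _ [u uu1 <-]; have := K_dot u uu1.
  rewrite -ler_pdivrMl // mulr1; lra.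
have : c + K^-1 <= c by apply: lb_le_inf lb; exists (dot e0 (S *m e0)), e0.
have : 0 < K^-1 by rewrite invr_gt0.
lra.
Qed.

Lemma rayleigh_inf_le_eigenvalue a : eigenvalue S a -> rayleigh_inf <= a.
Proof.
case/eigenvalueP=> v vS v_neq0; set u := v^T.
have Su : S *m u = a *: u by rewrite -S_sym -trmx_mul vS linearZ.
have uu_gt0 : 0 < dot u u.
  by rewrite lt_neqAle eq_sym dot_eq0 dot_ge0 andbT -[u]trmxK trmx_eq0 trmxK.
by rewrite -(ler_pM2r uu_gt0) (le_trans (rayleigh_inf_le u)) // Su dotZr.
Qed.

Lemma lambda_min_dot_le y : lambda_min S * dot y y <= dot y (S *m y).
Proof.
apply: le_trans (rayleigh_inf_le y); rewrite ler_wpM2r ?dot_ge0 //.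
apply: ge_inf eigenvalue_rayleigh_inf.
by exists rayleigh_inf => a /rayleigh_inf_le_eigenvalue.
Qed.

End Rayleigh.

Section Outer.
Variables (R : realType) (m : nat).
Implicit Types (p y : 'cV[R]_m).

Lemma outer_mul p y : outer p *m y = dot p y *: p.
Proof. by rewrite /outer -mulmxA (mx11_scalar (p^T *m y)) mul_mx_scalar. Qed.

Lemma dot_outer_le1 p : loewner_le (outer p) 1%:M -> dot p p <= 1.
Proof.
move=> /psdP/(_ p); rewrite mulmxBl mul1mx outer_mul dotBr dotZr.
have := dot_ge0 p; nra.
Qed.

Lemma dot_Smat_outer (phi : nat -> 'cV[R]_m) (mu : nat -> R) N k y :
  dot y (Smat (fun j => outer (phi j)) mu N k *m y) =
  \sum_(k <= j < N) mu j * dot (phi j) y ^+ 2.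
Proof.
rewrite /Smat mulmx_suml dot_sumr; apply: eq_bigr => j _.
by rewrite -scalemxAl outer_mul !dotZr (dotC y); ring.
Qed.

Lemma Smat_outer_sym (phi : nat -> 'cV[R]_m) (mu : nat -> R) N k :
  (Smat (fun j => outer (phi j)) mu N k)^T = Smat (fun j => outer (phi j)) mu N k.
Proof.
rewrite /Smat linear_sum; apply: eq_bigr => j _.
by rewrite linearZ /= /outer trmx_mul trmxK.
Qed.

Lemma Smat_outer_psd (phi : nat -> 'cV[R]_m) (mu : nat -> R) N k :
  (forall j, 0 <= mu j) -> psd (Smat (fun j => outer (phi j)) mu N k).
Proof.
move=> mu_ge0; apply/psdP => y; rewrite dot_Smat_outer.
by apply: sumr_ge0 => j _; rewrite mulr_ge0 ?sqr_ge0.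
Qed.

End Outer.

Section Trajectory.
Variables (R : realType) (m : nat) (phi : nat -> 'cV[R]_m) (x : 'cV[R]_m).

Definition traj k := Phi (fun j => outer (phi j)) k 0 *m x.
Definition innov k := dot (phi k) (traj k).
Definition energy k := dot (traj k) (traj k).

Lemma trajS k : traj k.+1 = traj k - innov k *: phi k.
Proof. by rewrite /traj /= -mulmxA mulmxBl mul1mx outer_mul. Qed.

Lemma traj_block a j : (a <= j)%N ->
  traj j = traj a - \sum_(a <= l < j) innov l *: phi l.
Proof.
elim: j => [|j IHj]; first by rewrite leqn0 => /eqP->; rewrite big_geq // subr0.
rewrite leq_eqVlt => /predU1P[->|]; first by rewrite big_geq // subr0.
by rewrite ltnS => aj; rewrite big_nat_recr //= trajS IHj // opprD addrA.
Qed.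

Lemma dot_traj_block a j : (a <= j)%N ->
  dot (phi j) (traj a) = innov j + \sum_(a <= l < j) dot (phi j) (phi l) * innov l.
Proof.
move=> aj; rewrite /innov (traj_block aj) dotBr dot_sumr.
under eq_bigr do rewrite dotZr mulrC.
by rewrite subrK.
Qed.

Hypothesis phi_le1 : forall k, dot (phi k) (phi k) <= 1.

Lemma energyS_le k : energy k.+1 <= energy k - innov k ^+ 2.
Proof.
rewrite /energy trajS dotBl !dotBr !dotZl !dotZr (dotC (traj k)) -/(innov k).
have := phi_le1 k; have := sqr_ge0 (innov k); nra.
Qed.

Lemma energy_telescope a b : (a <= b)%N ->
  energy b + \sum_(a <= l < b) innov l ^+ 2 <= energy a.
Proof.
elim: b => [|b IHb]; first by rewrite leqn0 => /eqP->; rewrite big_geq // addr0.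
rewrite leq_eqVlt => /predU1P[->|]; first by rewrite big_geq // addr0.
rewrite ltnS => ab; rewrite big_nat_recr //=.
have := IHb ab; have := energyS_le b; lra.
Qed.

Lemma energy_nonincreasing : nonincreasing_seq energy.
Proof.
move=> a b /energy_telescope; have : 0 <= \sum_(a <= l < b) innov l ^+ 2.
  by apply: sumr_ge0 => l _; exact: sqr_ge0.
lra.
Qed.

End Trajectory.

Lemma sum_triangular_sqr_le (R : realType) (mu : nat -> R) (c : nat -> nat -> R)
    (s : nat -> R) (a b : nat) : (forall j, 0 <= mu j) ->
  \sum_(a <= j < b) mu j * (s j + \sum_(a <= l < j) c j l * s l) ^+ 2 <=
  (Num.sqrt (maxmu mu a b) + Num.sqrt (\sum_(a <= j < b) mu j * \sum_(a <= l < j) c j l ^+ 2))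
    ^+ 2 * \sum_(a <= l < b) s l ^+ 2.
Proof.
move=> mu_ge0.
set D := \sum_(a <= l < b) s l ^+ 2; set Mx := maxmu mu a b.
set B := \sum_(a <= j < b) mu j * \sum_(a <= l < j) c j l ^+ 2.
have D_ge0 : 0 <= D by apply: sumr_ge0 => l _; exact: sqr_ge0.
have Mx_ge0 : 0 <= Mx by exact: bigmax_ge_id.
apply: le_trans (sum_minkowski _ _ _ (fun j _ => mu_ge0 j)) _.
set U := \sum_(_ <- _ | _) mu _ * s _ ^+ 2.
set V := \sum_(_ <- _ | _) mu _ * (\sum_(_ <- _ | _) _) ^+ 2.
have U_le : U <= Mx * D.
  rewrite /D mulr_sumr; apply: ler_sum_nat => j aj.
  rewrite ler_wpM2r ?sqr_ge0 //; apply: le_bigmax_seq => //.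
  by rewrite mem_index_iota.
have V_le : V <= B * D.
  rewrite /B mulr_suml; apply: ler_sum_nat => j /andP[aj jb].
  rewrite -mulrA ler_wpM2l //; apply: le_trans (sum_cauchy_schwarz1 _ _ _ _) _.
  apply: ler_wpM2l; first by apply: sumr_ge0 => l _; exact: sqr_ge0.
  rewrite /D (big_cat_nat aj (ltnW jb)) /= lerDl.
  by apply: sumr_ge0 => l _; exact: sqr_ge0.
have B_ge0 : 0 <= B.
  by apply: sumr_ge0 => j _; rewrite mulr_ge0 ?sumr_ge0 // => l _; exact: sqr_ge0.
have -> : (Num.sqrt Mx + Num.sqrt B) ^+ 2 * D =
    (Num.sqrt (Mx * D) + Num.sqrt (B * D)) ^+ 2.
  by rewrite !sqrtrM // -mulrDl exprMn sqr_sqrtr.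
rewrite ler_sqr ?nnegrE ?addr_ge0 ?sqrtr_ge0 //.
by apply: lerD; rewrite ler_sqrt ?mulr_ge0.
Qed.

Section Block.
Variables (R : realType) (n : nat) (phi : nat -> 'cV[R]_n.+1) (mu : nat -> R).
Hypotheses (mu_ge0 : forall j, 0 <= mu j) (phi_le1 : forall k, dot (phi k) (phi k) <= 1).
Variable x : 'cV[R]_n.+1.

Local Notation S b a := (Smat (fun j => outer (phi j)) mu b a).

Lemma lambda_min_energy_le a b :
  lambda_min (S b a) * energy phi x a <=
  denom phi mu a b * \sum_(a <= l < b) innov phi x l ^+ 2.
Proof.
apply: le_trans (lambda_min_dot_le (Smat_outer_sym _ _ _ _) (Smat_outer_psd _ _ _ mu_ge0) _) _.
rewrite dot_Smat_outer.
under eq_big_nat => j /andP[aj _] do rewrite (dot_traj_block _ _ aj).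
exact: sum_triangular_sqr_le.
Qed.

Lemma energy_block_contract a b : (a <= b)%N -> denom phi mu a b != 0 ->
  energy phi x b <=
  (1 - Num.max 0 (lambda_min (S b a) / denom phi mu a b)) * energy phi x a.
Proof.
move=> ab den_neq0.
have den_gt0 : 0 < denom phi mu a b by rewrite lt_def den_neq0 sqr_ge0.
have := energy_telescope x phi_le1 ab; have := dot_ge0 (traj phi x a).
set D := \sum_(a <= l < b) _; set E := energy phi x a => E_ge0 tel.
have D_ge0 : 0 <= D by apply: sumr_ge0 => l _; exact: sqr_ge0.
suff : Num.max 0 (lambda_min (S b a) / denom phi mu a b) * E <= D by lra.
have [_|_] := leP 0 (lambda_min (S b a) / denom phi mu a b); last by rewrite mul0r.
by rewrite mulrAC ler_pdivrMr // [leRHS]mulrC lambda_min_energy_le.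
Qed.

End Block.

Section Convergence.
Variable R : realFieldType.
Implicit Types a r : nat -> R.

Lemma contraction_bound a r : (forall k, 0 <= a k) -> (forall k, 0 <= r k) ->
    (forall k, a k.+1 <= (1 - r k.+1) * a k) ->
  forall N, a N * (1 + \sum_(1 <= k < N.+1) r k) <= a 0%N.
Proof.
move=> a_ge0 r_ge0 a_contr; elim=> [|N IHN]; first by rewrite big_geq // addr0 mulr1.
rewrite big_nat_recr //=.
have S_ge0 : 0 <= \sum_(1 <= k < N.+1) r k by apply: sumr_ge0.
move: IHN (a_contr N) (a_ge0 N) (r_ge0 N.+1) S_ge0.
set S := \sum_(_ <= _ < _) _; set b := a N.+1; set rho := r N.+1.
move=> IHN b_le aN_ge0 rho_ge0 S_ge0.
have b_leN : b <= a N by apply: le_trans b_le _; nra.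
(* b (1 + S + rho) <= (1 - rho) a_N (1 + S) + rho a_N <= a_N (1 + S) *)
have := ler_wpM2r (addr_ge0 ler01 S_ge0) b_le.
have := ler_wpM2r rho_ge0 b_leN.
have : 0 <= rho * a N * S by rewrite !mulr_ge0.
nra.
Qed.

Lemma contraction_cvg0 a r : (forall k, 0 <= a k) ->
    (forall k, a k.+1 <= (1 - Num.max 0 (r k.+1)) * a k) ->
    (fun n => \sum_(1 <= k < n) r k) @ \oo --> +oo ->
  a @ \oo --> 0.
Proof.
move=> a_ge0 a_contr r_divy.
pose rp k := Num.max 0 (r k).
have rp_ge0 k : 0 <= rp k by rewrite le_max lexx.
have rp_divy : (fun N => 1 + \sum_(1 <= k < N.+1) rp k) @ \oo --> +oo.
  apply: ger_cvgy r_divy; near=> N => /=.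
  have N_ge1 : (1 <= N)%N by near: N; exact: nbhs_infty_ge.
  have : \sum_(1 <= k < N) r k <= \sum_(1 <= k < N) rp k.
    by apply: ler_sum => k _; rewrite le_max lexx orbT.
  rewrite big_nat_recr //=; have := rp_ge0 N; lra.
apply: (@squeeze_cvgr _ _ _ _ (cst 0) (fun N => a 0%N * (1 + \sum_(1 <= k < N.+1) rp k)^-1)).
- near=> N; rewrite a_ge0 /= ler_pdivlMr ?ltr_wpDr ?sumr_ge0 //.
  by apply: contraction_bound.
- exact: cvg_cst.
- rewrite -[X in _ --> X](mulr0 (a 0%N)); apply: cvgM; first exact: cvg_cst.
  by apply/gtr0_cvgV0 => //; near=> N; rewrite ltr_wpDr ?sumr_ge0.
Unshelve. all: by end_near.
Qed.

Lemma nonincreasing_cvg0_subseq a (t : nat -> nat) : nonincreasing_seq a ->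
  (forall k, 0 <= a k) -> (a \o t) @ \oo --> 0 -> a @ \oo --> 0.
Proof.
move=> a_noninc a_ge0 /cvgr0Pnorm_lt at0; apply/cvgr0Pnorm_lt => e e_gt0.
have [N _ /(_ N (leqnn N))] := at0 e e_gt0; rewrite /= ger0_norm // => atN_lt.
near=> k; rewrite ger0_norm // (le_lt_trans _ atN_lt) //; apply: a_noninc.
by near: k; exact: nbhs_infty_ge.
Unshelve. all: by end_near.
Qed.

Lemma sqr_le_cvg0 (g h : nat -> R) : (forall k, g k ^+ 2 <= h k) ->
  h @ \oo --> 0 -> g @ \oo --> 0.
Proof.
move=> g_le /cvgr0Pnorm_lt h0; apply/cvgr0Pnorm_lt => e e_gt0.
near=> k; have : `|h k| < e ^+ 2 by near: k; exact: h0 (exprn_gt0 2 e_gt0).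
have := g_le k; rewrite -real_normK ?num_real //.
have := ler_norm (h k); have := normr_ge0 (g k); nra.
Unshelve. all: by end_near.
Qed.

Lemma cvg_mx0_entrywise (p q : nat) (f : nat -> 'M[R]_(p, q)) :
  (forall i j, (fun k => f k i j) @ \oo --> 0) -> f @ \oo --> (0 : 'M[R]_(p, q)).
Proof.
move=> f_ij; apply/cvgr0Pnorm_lt => e e_gt0.
have : \forall k \near \oo, forall ij : 'I_p * 'I_q, `|f k ij.1 ij.2| < e.
  by apply: filter_forall => -[i j]; exact: cvgr0_norm_lt (f_ij i j) e e_gt0.
apply: filterS => k f_lt; rewrite [`|_|]mx_normrE.
by apply: bigmax_lt => // ij _; exact: f_lt.
Qed.

End Convergence.

Theorem mainTheorem2 (R : realType) (m : nat) (hm : (1 <= m)%N)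
  (phi : nat -> 'cV[R]_m)
  (hA : forall n, loewner_le 0 (outer (phi n)) /\ loewner_le (outer (phi n)) 1%:M)
  (mu : nat -> R) (hmu : forall j, 0 <= mu j)
  (t : nat -> nat) (ht : forall a b, (a < b)%N -> (t a < t b)%N)
  (hden : forall k, (1 <= k)%N -> denom phi mu (t k.-1) (t k) != 0)
  (hdiv : (fun n => \sum_(1 <= k < n)
             lambda_min (Smat (fun j => outer (phi j)) mu (t k) (t k.-1))
             / denom phi mu (t k.-1) (t k)) @ \oo --> +oo) :
  (fun n => Phi (fun j => outer (phi j)) n 0) @ \oo --> (0 : 'M[R]_m).
Proof.
case: m hm phi hA hden hdiv => [//|n] _ phi hA hden hdiv.
have phi_le1 k : dot (phi k) (phi k) <= 1 by apply: dot_outer_le1; case: (hA k).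
have energy_cvg0 x : energy phi x @ \oo --> 0.
  apply: (nonincreasing_cvg0_subseq (t := t) (energy_nonincreasing x phi_le1)) => [k|].
    exact: dot_ge0.
  apply: (contraction_cvg0 _ _ hdiv) => k; first exact: dot_ge0.
  exact: (energy_block_contract hmu phi_le1 x (ltnW (ht _ _ (ltnSn k))) (hden k.+1 isT)).
apply: (@cvg_mx0_entrywise R) => i j.
apply: (sqr_le_cvg0 _ (energy_cvg0 (delta_mx j 0))) => k.
rewrite /energy dotE (bigD1 i) //= -expr2 /traj -colE mxE lerDl.
by apply: sumr_ge0 => l _; rewrite -expr2 sqr_ge0.
Qed.
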